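(* Let $m,n$ be positive integers, let $\bm{D}_0\in\mathbb{R}^{m\times m}$ be invertible, let $\bm{X}_0\in\mathbb{R}^{m\times n}$, and let $\bm{Y}=\bm{D}_0\bm{X}_0$. Let $\Omega\subseteq[m]\times[n]$ be the support of $\bm{X}_0$ (the set of index pairs of its nonzero entries) and $\Omega^c$ its complement. Consider the linear system in the unknowns $\bm{H}\in\mathbb{R}^{m\times m}$ and $\bm{X}\in\mathbb{R}^{m\times n}$: $$\left[\bm{Y}^{T},-\bm{I}_{n\times n}\right]\left[\begin{array}{c}\bm{H}^{T}\\ \bm{X}^{T}\end{array}\right]=\bm{0}_{n\times m}\quad\text{and}\quad \mathcal{P}_{\Omega^{c}}(\bm{X})=\bm{0},$$ i.e. $\bm{H}\bm{Y}=\bm{X}$ and $\bm{X}_{i,j}=0$ for all $(i,j)\in\Omega^c$. Then this system has at least $m$ linearly independent solutions, where a solution is identified with the matrix $\left[\bm{H},\bm{X}\right]^{T}\in\mathbb{R}^{(m+n)\times m}$.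
   Context: $[n]=\{1,\dots,n\}$. For a matrix $\bm{X}$ and an index set $\Omega^c$, $\mathcal{P}_{\Omega^c}(\bm{X})$ denotes the vector of entries of $\bm{X}$ indexed by $\Omega^c$. *)

From HB Require Import structures.
From mathcomp Require Import all_boot all_order all_algebra.
Set Implicit Arguments. Unset Strict Implicit. Unset Printing Implicit Defensive.
Import GRing.Theory Num.Theory.
Local Open Scope ring_scope.

Definition is_solution (R : realFieldType) (m n : nat)
    (Y X0 : 'M[R]_(m, n)) (S : 'M[R]_(m + n, m)) : Prop :=
  exists (H : 'M[R]_m) (X : 'M[R]_(m, n)),
    [/\ S = col_mx H^T X^T,
        row_mx Y^T (- (1%:M : 'M[R]_n)) *m S = 0
      & forall (i : 'I_m) (j : 'I_n), X0 i j = 0 -> X i j = 0].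

From HB Require Import structures.
From mathcomp Require Import all_boot all_order all_algebra.
Set Implicit Arguments. Unset Strict Implicit. Unset Printing Implicit Defensive.
Import GRing.Theory Num.Theory.
Local Open Scope ring_scope.

(* For every diagonal matrix P, the pair (H, X) = (P D0^-1, P X0) solves the
   system: H Y = P X0, and scaling the rows of X0 keeps its zero entries.
   The map P |-> [H, X]^T is linear and injective (its upper block determines
   P because D0 is invertible), so the m diagonal matrix units give m
   independent solutions. *)

Lemma free_map_inj (K : fieldType) (vT wT : vectType K) (f : {linear vT -> wT})
    (X : seq vT) :
  injective f -> free X -> free (map f X).
Proof.
move=> f_inj; rewrite /free size_map -(eq_map (lfunE f)) -limg_span limg_dim_eq //.
have /lker0P/eqP-> : injective (linfun f) by move=> u v; rewrite !lfunE => /f_inj.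
exact: capv0.
Qed.

Lemma free_row_delta (K : fieldType) (n : nat) :
  free [tuple delta_mx 0 i : 'rV[K]_n | i < n].
Proof.
apply/freeP => k sum_k0 j.
suff /rowP/(_ j) : \row_i k i = 0 by rewrite !mxE.
rewrite (row_sum_delta (\row_i k i)) -[RHS]sum_k0; apply: eq_bigr => i _.
by rewrite -tnth_nth tnth_mktuple mxE.
Qed.

Lemma diag_mx_inj (V : nmodType) (n : nat) : injective (@diag_mx V n).
Proof.
move=> d e de; apply/rowP => i.
by have := congr1 (fun A : 'M[V]_n => A i i) de; rewrite !mxE eqxx !mulr1n.
Qed.

Lemma is_solution_col_mx (R : realFieldType) (m n : nat) (Y X0 : 'M[R]_(m, n))
    (H : 'M[R]_m) (X : 'M[R]_(m, n)) :
  H *m Y = X -> (forall i j, X0 i j = 0 -> X i j = 0) ->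
  is_solution Y X0 (col_mx H^T X^T).
Proof.
move=> HYX suppX; exists H, X; split=> //.
by rewrite mul_row_col mulNmx mul1mx -trmx_mul HYX subrr.
Qed.

Section DiagonalSolutions.

Variables (R : realFieldType) (m n : nat) (D0 : 'M[R]_m) (X0 : 'M[R]_(m, n)).
Hypothesis D0_unit : D0 \in unitmx.

Definition diag_solution (d : 'rV[R]_m) : 'M[R]_(m + n, m) :=
  col_mx (diag_mx d *m invmx D0)^T (diag_mx d *m X0)^T.

Fact diag_solution_is_linear : linear diag_solution.
Proof.
move=> a d e; rewrite /diag_solution linearP.
by rewrite !mulmxDl -!scalemxAl !linearD !linearZ /= scale_col_mx add_col_mx.
Qed.

HB.instance Definition _ :=
  GRing.isLinear.Build R 'rV[R]_m 'M[R]_(m + n, m) _ diag_solution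
    diag_solution_is_linear.

Lemma diag_solution_inj : injective diag_solution.
Proof.
move=> d e /(congr1 usubmx); rewrite !col_mxKu => /trmx_inj.
by move/(can_inj (mulmxKV D0_unit))/diag_mx_inj.
Qed.

Lemma diag_solutionP (d : 'rV[R]_m) : is_solution (D0 *m X0) X0 (diag_solution d).
Proof.
apply: is_solution_col_mx => [|i j X0ij]; first by rewrite -mulmxA mulKmx.
by rewrite mul_diag_mx mxE X0ij mulr0.
Qed.

End DiagonalSolutions.

Theorem proposition1 (R : realFieldType) (m n : nat) (Hm : (0 < m)%N) (Hn : (0 < n)%N)
    (D0 : 'M[R]_m) (X0 Y : 'M[R]_(m, n))
    (HD0 : D0 \in unitmx) (HY : Y = D0 *m X0) :
  exists s : seq 'M[R]_(m + n, m),
    [/\ size s = m, free s & forall S, S \in s -> is_solution Y X0 S].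
Proof.
exists (map (diag_solution D0 X0) [tuple delta_mx 0 i | i < m]); split.
- by rewrite size_map size_tuple.
- exact/free_map_inj/free_row_delta/diag_solution_inj.
- by move=> S /mapP [d _ ->]; rewrite HY; apply: diag_solutionP.
Qed.
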